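(* $\mathrm{Sort}(\mathrm{SC}_{1\underline{23}})$ is a permutation class.
   Context: $\mathfrak S_n$ is the set of permutations of $\{1,\dots,n\}$. A permutation $\pi$ contains a (classical) permutation $\tau$ if some subsequence of $\pi$ has the same relative order as $\tau$. A permutation class is a set $\Pi$ of permutations such that every permutation contained in some $\pi\in\Pi$ is also in $\Pi$. A vincular pattern is a permutation with some entries underlined; a sequence contains it if it has a subsequence with the same relative order in which entries corresponding to adjacent underlined entries occupy consecutive positions. An occurrence of $1\underline{23}$ is $a_i a_j a_{j+1}$ with $i<j$ and $a_i<a_j<a_{j+1}$. For a pattern $\sigma$, the map $\mathrm{SC}_\sigma$ acts on $\tau$: read entries left to right; when the next entry $x$ is read, if pushing $x$ yields a stack whose entries read top to bottom (stack adjacency = consecutive positions) avoid $\sigma$, push $x$; otherwise pop the top stack entry to the output and repeat. At the end pop all remaining entries; the output is $\mathrm{SC}_\sigma(\tau)$. West's stack-sorting map is $s=\mathrm{SC}_{21}$. $\mathrm{Sort}_n(\mathrm{SC}_\sigma)=\{\tau\in\mathfrak S_n : s(\mathrm{SC}_\sigma(\tau))=12\cdots n\}$ and $\mathrm{Sort}(\mathrm{SC}_\sigma)=\bigcup_{n\ge1}\mathrm{Sort}_n(\mathrm{SC}_\sigma)$. *)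

From mathcomp Require Import all_boot.
Set Implicit Arguments. Unset Strict Implicit. Unset Printing Implicit Defensive.

Definition is_perm (n : nat) (p : seq nat) : bool := perm_eq p (iota 1 n).

(* A (possibly vincular) pattern is a pair (tau, adj): tau is the sequence of
   the pattern, and adj lists the 0-based positions k such that entries k and
   k+1 of tau are both underlined (i.e. adjacent underlined entries), so their
   matching entries must occupy consecutive positions. *)

Definition occ_at (s tau : seq nat) (adj : seq nat) (idx : seq nat) : bool :=
  [&& size idx == size tau,
      all (fun i => all (fun j =>
         (nth 0 s (nth 0 idx i) < nth 0 s (nth 0 idx j)) == (nth 0 tau i < nth 0 tau j))
         (iota 0 (size tau))) (iota 0 (size tau))
    & all (fun k => nth 0 idx k.+1 == (nth 0 idx k).+1) adj].

Fixpoint all_masks (n : nat) : seq bitseq :=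
  if n is n'.+1 then [seq b :: m | b <- [:: true; false], m <- all_masks n'] else [:: [::]].

Definition vcontains (s tau adj : seq nat) : bool :=
  has (fun m => occ_at s tau adj (mask m (iota 0 (size s)))) (all_masks (size s)).

Definition contains (s tau : seq nat) : bool := vcontains s tau [::].

Section SC.
Variable avoid : seq nat -> bool. (* the stack (top first) is allowed iff avoid holds *)

Fixpoint push_pop (x : nat) (st : seq nat) : seq nat * seq nat :=
  if avoid (x :: st) then ([::], x :: st) else
  match st with
  | [::] => ([::], [:: x])
  | y :: st' => let: (p, s) := push_pop x st' in (y :: p, s)
  end.

Fixpoint SC_aux (input st : seq nat) : seq nat :=
  match input with
  | [::] => st
  | x :: r => let: (p, s) := push_pop x st in p ++ SC_aux r s
  end.

Definition SC (tau : seq nat) : seq nat := SC_aux tau [::].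
End SC.

Definition SCv (tau adj : seq nat) : seq nat -> seq nat :=
  SC (fun st => ~~ vcontains st tau adj).

Definition west_s : seq nat -> seq nat := SCv [:: 2; 1] [::].

(* SC_{1 \underline{23}} : entries 2 and 3 (0-based positions 1 and 2) underlined *)
Definition SC_1_23 : seq nat -> seq nat := SCv [:: 1; 2; 3] [:: 1].

Definition Sort_n (f : seq nat -> seq nat) (n : nat) (tau : seq nat) : bool :=
  is_perm n tau && (west_s (f tau) == iota 1 n).

Definition SortSet (f : seq nat -> seq nat) (tau : seq nat) : Prop :=
  exists2 n, 1 <= n & Sort_n f n tau.

Definition perm_class (Pi : seq nat -> Prop) : Prop :=
  (forall pi, Pi pi -> exists2 n, 1 <= n & is_perm n pi) /\
  (forall pi tau, Pi pi -> (exists2 m, 1 <= m & is_perm m tau) ->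
     contains pi tau -> Pi tau).

Example west_ex : west_s [:: 3; 1; 2] = [:: 1; 2; 3]. Proof. by vm_compute. Qed.
Example west_ex2 : west_s [:: 2; 3; 1] = [:: 2; 1; 3]. Proof. by vm_compute. Qed.
Example sc_ex : SC_1_23 [:: 1; 2; 3] = [:: 3; 2; 1]. Proof. by vm_compute. Qed.
Example sc_ex2 : SC_1_23 [:: 2; 1; 3] = [:: 3; 1; 2]. Proof. by vm_compute. Qed.
Example sc_ex3 : SC_1_23 [:: 2; 3; 1] = [:: 1; 3; 2]. Proof. by vm_compute. Qed.
Example cont_ex : contains [:: 3; 1; 4; 2] [:: 2; 1] && ~~ contains [:: 1; 2; 3] [:: 2; 1]. Proof. by vm_compute. Qed.

From mathcomp Require Import all_boot zify.
Set Implicit Arguments. Unset Strict Implicit. Unset Printing Implicit Defensive.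

(* Sort(SC_1_23) is the class Av(132, 3214, 4213). By Knuth, West's stack sort
   fixes a permutation exactly when it avoids 231, so it suffices to show that
   SC_1_23(tau) avoids 231 iff tau avoids 132, 3214 and 4213. Read tau from left
   to right: while the prefix read so far is in the class, the machine is in an
   explicit configuration (decreasing output, stack made of two decreasing runs)
   whose output followed by its stack avoids 231; the first entry completing a
   132, 3214 or 4213 creates a 231 there, and later steps only insert entries into
   output-followed-by-stack, so the 231 survives. A class defined by avoidance is
   closed under containment. *)

Lemma mem_all_masks n m : size m = n -> m \in all_masks n.
Proof.
elim: n m => [|n IHn] [|b m] //= [size_m].
have cons_inj (c : bool) : injective (cons c) by move=> ? ? [].
by rewrite mem_cat; case: b; rewrite ?mem_cat (mem_map (cons_inj _)) IHn ?orbT.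
Qed.

Lemma vcontainsP s tau adj :
  reflect (exists idx, [/\ sorted ltn idx, all (gtn (size s)) idx & occ_at s tau adj idx])
          (vcontains s tau adj).
Proof.
apply: (iffP hasP) => [[m _ occ] | [idx [idx_sorted idx_small occ]]].
  exists (mask m (iota 0 (size s))); split => //.
  - exact: (sorted_mask ltn_trans m (iota_ltn_sorted 0 _)).
  - by apply/allP => i /mem_mask; rewrite mem_iota.
exists [seq i \in idx | i <- iota 0 (size s)].
  by rewrite mem_all_masks ?size_map ?size_iota.
rewrite -filter_mask (_ : [seq i <- _ | i \in idx] = idx) //.
apply: (irr_sorted_eq ltn_trans ltnn) => //.
  exact: (sorted_filter ltn_trans _ (iota_ltn_sorted 0 _)).
move=> i; rewrite mem_filter mem_iota add0n /=.
by case idx_i: (i \in idx) => //=; move/allP: idx_small => /(_ i idx_i).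
Qed.

Lemma vcontains21 s : vcontains s [:: 2; 1] [::] = ~~ sorted leq s.
Proof.
apply/idP/idP => [/vcontainsP [idx [+ + occ]] | ].
  case: idx occ => [|i [|j [|k idx]]] occ; try by case/and3P: occ.
  rewrite /= andbT => ij /and3P [i_s j_s _].
  move: occ; rewrite /occ_at /= !andbT => /andP [_ /andP [/eqP ji _]].
  apply/negP => /(sorted_leq_nth leq_trans leqnn 0) le_nth.
  by move: ji; rewrite ltnNge le_nth // ltnW.
apply: contraR => no_occ; apply/(sortedP 0) => i i_s.
rewrite leqNgt; apply: contra no_occ => descent; apply/vcontainsP.
exists [:: i; i.+1]; split => /=; first by rewrite ltnSn.
  by rewrite i_s (ltn_trans (ltnSn i) i_s).
by rewrite /occ_at /= !andbT !ltnn descent ltnNge (ltnW descent).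
Qed.

Lemma occ_at_1_23 s i j k : occ_at s [:: 1; 2; 3] [:: 1] [:: i; j; k] =
  [&& nth 0 s i < nth 0 s j, nth 0 s j < nth 0 s k & k == j.+1].
Proof. by rewrite /occ_at /= !ltnn !eqb_id !eqbF_neg /= !andbT; apply/idP/idP; lia. Qed.

Fixpoint ascent_above (y : nat) (s : seq nat) : bool :=
  if s is a :: t then (if t is b :: _ then (y < a) && (a < b) else false) || ascent_above y t
  else false.

Fixpoint has_1_23 (s : seq nat) : bool :=
  if s is y :: t then ascent_above y t || has_1_23 t else false.

Notation avoid1_23 := (fun st => ~~ has_1_23 st).

Lemma ascent_aboveP y s :
  ascent_above y s <-> exists j, j.+1 < size s /\ y < nth 0 s j < nth 0 s j.+1.
Proof.
elim: s => [|a t IHt] /=; first by split => // [[j []]].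
split => [/orP [] | [[|j] [j_t asc]]].
- by case: t {IHt} => // b t asc; exists 0.
- by case/IHt => j [j_t asc]; exists j.+1.
- by case: t {IHt} j_t asc => // b t _ /= ->.
- by apply/orP; right; apply/IHt; exists j.
Qed.

Lemma has_1_23P s : has_1_23 s <->
  exists i j, [/\ i < j, j.+1 < size s & nth 0 s i < nth 0 s j < nth 0 s j.+1].
Proof.
elim: s => [|y t IHt] /=; first by split => // [[i [j []]]].
split => [/orP [] | [[|i] [[|j] [// ij j_s asc]]]].
- by case/ascent_aboveP => j [j_t asc]; exists 0, j.+1.
- by case/IHt => i [j [ij j_t asc]]; exists i.+1, j.+1.
- by apply/orP; left; apply/ascent_aboveP; exists j.
- by apply/orP; right; apply/IHt; exists i, j.
Qed.

Lemma vcontains_1_23 s : vcontains s [:: 1; 2; 3] [:: 1] = has_1_23 s.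
Proof.
apply/idP/idP => [/vcontainsP [idx [+ + occ]] | /has_1_23P [i [j [ij j_s asc]]]].
  case: idx occ => [|i [|j [|k [|l idx]]]] occ; try by case/and3P: occ.
  move: occ; rewrite occ_at_1_23 => /and3P [ai_aj aj_ak /eqP eq_k]; subst k.
  move=> /= /and3P [ij _ _] /and4P [_ _ j_s _].
  by apply/has_1_23P; exists i, j; split => //; rewrite ai_aj aj_ak.
apply/vcontainsP; exists [:: i; j; j.+1]; rewrite occ_at_1_23 eqxx andbT asc.
have j_s' : j < size s := ltn_trans (ltnSn j) j_s.
by rewrite /= ij ltnSn j_s j_s' (ltn_trans ij j_s').
Qed.

Lemma sorted_catE (T : Type) (r : rel T) : transitive r -> forall s1 s2,
  sorted r (s1 ++ s2) = [&& allrel r s1 s2, sorted r s1 & sorted r s2].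
Proof. by move=> r_tr s1 s2; rewrite !(sorted_pairwise r_tr) pairwise_cat. Qed.

Lemma uniq_cat_disjoint (T : eqType) (s1 s2 : seq T) a :
  uniq (s1 ++ s2) -> a \in s1 -> a \in s2 -> False.
Proof. by rewrite cat_uniq => /and3P [_ /hasPn disj _] a1 /disj; rewrite a1. Qed.

Lemma head_rev (T : Type) (x0 : T) s : head x0 (rev s) = last x0 s.
Proof. by case/lastP: s => [|s x] //; rewrite rev_rcons last_rcons. Qed.

Lemma last_in (T : eqType) (x0 : T) s : s != [::] -> last x0 s \in s.
Proof. by case: s => //= x s _; apply: mem_last. Qed.

Lemma sorted_gtn_last_le (s : seq nat) v : sorted gtn s -> v \in s -> last 0 s <= v.
Proof.
case/lastP: s => [|s l] //; rewrite last_rcons -rev_sorted rev_rcons mem_rcons inE /=.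
move=> /(order_path_min ltn_trans) /allP l_lt /predU1P [-> // | v_s].
by apply/ltnW/l_lt; rewrite mem_rev.
Qed.

Lemma sorted_gtn_last_min (s : seq nat) m : sorted gtn s -> m \in s ->
  {in s, forall v, m <= v} -> last 0 s = m.
Proof.
move=> s_dec m_s m_min; apply/eqP; rewrite eqn_leq sorted_gtn_last_le // m_min //.
by case: s s_dec m_s {m_min} => //= a s _ _; apply: mem_last.
Qed.

Section Before.
Variable T : eqType.
Implicit Types (s : seq T) (a b x y : T).

Definition before s a b := [&& a \in s, b \in s & index a s < index b s].

Lemma before_mem s a b : before s a b -> (a \in s) && (b \in s).
Proof. by case/and3P => -> ->. Qed.

Lemma before_asym s a b : before s a b -> before s b a -> False.
Proof. by case/and3P => _ _ ab /and3P [_ _ ba]; have := ltn_trans ab ba; rewrite ltnn. Qed.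

Lemma before_sorted (r : rel T) s a b : transitive r -> irreflexive r -> sorted r s ->
  a \in s -> b \in s -> before s a b = r a b.
Proof.
move=> r_tr r_irr s_sorted a_s b_s; rewrite /before a_s b_s /=.
have r_index := sorted_ltn_index r_tr s_sorted.
apply/idP/idP => [|rab]; first exact: r_index.
case: ltngtP => // [ba | eq_ab].
  by have := r_tr _ _ _ rab (r_index _ _ b_s a_s ba); rewrite r_irr.
by move: rab; rewrite -(nth_index a a_s) -(nth_index a b_s) eq_ab r_irr.
Qed.

Lemma before_sorted_rel (r : rel T) s a b : transitive r -> irreflexive r -> sorted r s ->
  before s a b -> r a b.
Proof.
move=> r_tr r_irr s_sorted ab; case/andP: (before_mem ab) => a_s b_s.
by rewrite -(before_sorted r_tr r_irr s_sorted a_s b_s).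
Qed.

Lemma before_catl s1 s2 a b : before s1 a b -> before (s1 ++ s2) a b.
Proof. by case/and3P => a1 b1 ab; rewrite /before !mem_cat a1 b1 !index_cat a1 b1. Qed.

Lemma before_cat s1 s2 a b : uniq (s1 ++ s2) -> a \in s1 -> b \in s2 -> before (s1 ++ s2) a b.
Proof.
move=> u a1 b2; have b1 : b \notin s1 by apply/negP => b1; apply: (uniq_cat_disjoint u b1 b2).
rewrite /before !mem_cat a1 b2 orbT /= !index_cat a1 (negbTE b1).
by rewrite (leq_trans _ (leq_addr _ _)) ?index_mem.
Qed.

Lemma before_catr_notin s1 s2 a b :
  a \notin s1 -> b \notin s1 -> before s2 a b -> before (s1 ++ s2) a b.
Proof.
move=> a1 b1 /and3P [a2 b2 ab].
by rewrite /before !mem_cat a2 b2 !orbT !index_cat (negbTE a1) (negbTE b1) ltn_add2l.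
Qed.

Lemma before_catr s1 s2 a b : uniq (s1 ++ s2) -> before s2 a b -> before (s1 ++ s2) a b.
Proof.
move=> u ab; case/andP: (before_mem ab) => a2 b2.
apply: before_catr_notin => //.
- by apply/negP => a1; apply: (uniq_cat_disjoint u a1 a2).
- by apply/negP => b1; apply: (uniq_cat_disjoint u b1 b2).
Qed.

Lemma before_catE s1 s2 a b : uniq (s1 ++ s2) -> before (s1 ++ s2) a b ->
  [\/ before s1 a b, (a \in s1) && (b \in s2) | before s2 a b].
Proof.
move=> u /and3P []; rewrite !mem_cat !index_cat.
have [a1|a1] := boolP (a \in s1); have [b1|b1] := boolP (b \in s1) => /= a_s b_s ab.
- by constructor 1; apply/and3P.
- by constructor 2.
- by move: ab; rewrite ltnNge (leq_trans (ltnW _) (leq_addr _ _)) ?index_mem.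
- by constructor 3; rewrite /before a_s b_s -(ltn_add2l (size s1)).
Qed.

Lemma before_cat_inl s1 s2 a b :
  uniq (s1 ++ s2) -> before (s1 ++ s2) a b -> b \in s1 -> before s1 a b.
Proof.
move=> u /(before_catE u) [// | /andP [_ b2] | /before_mem /andP [_ b2]] b1;
by case: (uniq_cat_disjoint u b1 b2).
Qed.

Lemma before_cat_inr s1 s2 a b :
  uniq (s1 ++ s2) -> before (s1 ++ s2) a b -> a \in s2 -> before s2 a b.
Proof.
move=> u /(before_catE u) [/before_mem /andP [a1 _] | /andP [a1 _] | //] a2;
by case: (uniq_cat_disjoint u a1 a2).
Qed.

Lemma before_head a s b : a \notin s -> b \in s -> before (a :: s) a b.
Proof.
move=> a_s b_s; rewrite /before !inE eqxx b_s orbT /= eqxx.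
by case: eqVneq => // eq_ba; rewrite eq_ba b_s in a_s.
Qed.

Lemma before_insert s1 s2 x a b : uniq (s1 ++ x :: s2) -> a != x -> b != x ->
  before (s1 ++ s2) a b -> before (s1 ++ x :: s2) a b.
Proof.
move=> u ax bx; have u' : uniq (s1 ++ s2).
  by move: u; rewrite !cat_uniq /= => /and4P [-> /norP [_ ->] _ ->].
case/(before_catE u') => [/before_catl -> // | /andP [a1 b2] | ab2].
  by apply: before_cat => //; rewrite inE b2 orbT.
case/andP: (before_mem ab2) => a2 b2.
apply: before_catr_notin; last by apply: (before_catr_notin (s1 := [:: x])); rewrite ?inE.
- by apply/negP => a1; apply: (uniq_cat_disjoint u a1); rewrite inE a2 orbT.
- by apply/negP => b1; apply: (uniq_cat_disjoint u b1); rewrite inE b2 orbT.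
Qed.

Lemma before_rcons s y a b : uniq (rcons s y) ->
  before (rcons s y) a b = before s a b || (b == y) && (a \in s).
Proof.
rewrite -cats1 => u; apply/idP/idP.
  case/(before_catE u) => [-> // | /andP [a_s] | /and3P []]; rewrite ?inE.
    by move=> ->; rewrite a_s orbT.
  by move=> /eqP -> /eqP ->; rewrite ltnn.
case/orP => [/before_catl -> // | /andP [/eqP -> a_s]].
by apply: before_cat; rewrite ?inE.
Qed.

Lemma before_rconsF s y b : uniq (rcons s y) -> before (rcons s y) y b = false.
Proof.
move=> u; rewrite before_rcons //; apply/negP => /orP [/before_mem /andP [y_s _] | /andP [_ y_s]];
by move: u; rewrite rcons_uniq y_s.
Qed.

Lemma before_rcons_in s x a b : uniq (rcons s x) -> b \in s ->
  before (rcons s x) a b = before s a b.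
Proof.
move=> u b_s; rewrite before_rcons //; case: eqP => [eq_bx | _]; last by rewrite orbF.
by move: u; rewrite rcons_uniq -eq_bx b_s.
Qed.

Lemma before_rcons_last s x a : uniq (rcons s x) -> a \in s -> before (rcons s x) a x.
Proof. by move=> u a_s; rewrite before_rcons // eqxx a_s orbT. Qed.

Lemma before_rconsl s x a b : uniq (rcons s x) -> before s a b -> before (rcons s x) a b.
Proof. by move=> u ab; rewrite before_rcons // ab. Qed.

End Before.

Lemma before_rev_inc (R : seq nat) a b : sorted ltn R -> a \in R -> b \in R ->
  before (rev R) a b = (b < a).
Proof.
move=> R_inc a_R b_R.
by rewrite (before_sorted (rev_trans ltn_trans) ltnn) ?rev_sorted ?mem_rev.
Qed.

(** * Stack sorting with a forbidden pattern *)

Fixpoint run (avoid : seq nat -> bool) (input st : seq nat) : seq nat * seq nat :=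
  if input is x :: r then
    let: (p, s) := push_pop avoid x st in
    let: (out, s') := run avoid r s in (p ++ out, s')
  else ([::], st).

Lemma SC_auxE avoid input st :
  SC_aux avoid input st = (run avoid input st).1 ++ (run avoid input st).2.
Proof.
elim: input st => [|x r IHr] st //=.
case: (push_pop avoid x st) => p s; rewrite IHr.
by case: (run avoid r s) => out s' /=; rewrite catA.
Qed.

Lemma run_rcons avoid input x st :
  run avoid (rcons input x) st =
  let: (out, s) := run avoid input st in
  let: (p, s') := push_pop avoid x s in (out ++ p, s').
Proof.
elim: input st => [|y r IHr] st /=.
  by case: (push_pop avoid x st) => p s; rewrite cats0.
case: (push_pop avoid y st) => p s; rewrite IHr.
case: (run avoid r s) => out s'; case: (push_pop avoid x s') => p' s''.
by rewrite catA.
Qed.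

Lemma push_pop_cons avoid x y st : push_pop avoid x (y :: st) =
  if avoid (x :: y :: st) then ([::], x :: y :: st)
  else let: (p, s) := push_pop avoid x st in (y :: p, s).
Proof. by []. Qed.

Lemma push_pop_split avoid x st :
  exists p s, push_pop avoid x st = (p, x :: s) /\ st = p ++ s.
Proof.
elim: st => [|y st [p [s [pp_st e_st]]]] /=; first by case: (avoid [:: x]); exists [::], [::].
case: (avoid _); first by exists [::], (y :: st).
by rewrite pp_st e_st; exists (y :: p), s.
Qed.

Lemma run_perm avoid input st :
  perm_eq ((run avoid input st).1 ++ (run avoid input st).2) (input ++ st).
Proof.
elim: input st => [|x r IHr] st //=.
case: (push_pop_split avoid x st) => p [s [-> ->]].
have := IHr (x :: s); case: (run avoid r (x :: s)) => out s' /= /permP count_eq.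
by apply/permP => q; rewrite -catA count_cat count_eq /= !count_cat /=; lia.
Qed.

Lemma SC_perm avoid tau : perm_eq (SC avoid tau) tau.
Proof. by rewrite /SC SC_auxE; have := run_perm avoid tau [::]; rewrite cats0. Qed.

Lemma eq_push_pop avoid avoid' : avoid =1 avoid' -> push_pop avoid =2 push_pop avoid'.
Proof. by move=> eq_av x; elim=> [|y st IHst] /=; rewrite eq_av ?IHst. Qed.

Lemma eq_SC avoid avoid' : avoid =1 avoid' -> SC avoid =1 SC avoid'.
Proof.
move=> eq_av tau; rewrite /SC; elim: tau [::] => [|x r IHr] st //=.
by rewrite (eq_push_pop eq_av); case: (push_pop avoid' x st) => p s; rewrite IHr.
Qed.

Lemma west_sE : west_s =1 SC (sorted leq).
Proof. by apply: eq_SC => st; rewrite vcontains21 negbK. Qed.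

Lemma SC_1_23E : SC_1_23 =1 SC avoid1_23.
Proof. by apply: eq_SC => st; rewrite vcontains_1_23. Qed.

(** * West's stack sort and 231 *)

Definition avoids231 (s : seq nat) : bool :=
  all (fun b => all (fun c => all (fun a =>
    ~~ [&& before s b c, before s c a & a < b < c]) s) s) s.

Lemma avoids231P s :
  reflect (forall b c a, before s b c -> before s c a -> ~~ (a < b < c)) (avoids231 s).
Proof.
apply: (iffP allP) => [no231 b c a bc ca | no231 b b_s].
  case/andP: (before_mem bc) => b_s c_s; case/andP: (before_mem ca) => _ a_s.
  by move/allP: (no231 b b_s) => /(_ c c_s) /allP /(_ a a_s); rewrite bc ca.
apply/allP => c c_s; apply/allP => a a_s; apply/negP => /and3P [bc ca abc].
by move: (no231 b c a bc ca); rewrite abc.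
Qed.

Lemma avoids231_delete s1 s2 x : uniq (s1 ++ x :: s2) ->
  avoids231 (s1 ++ x :: s2) -> avoids231 (s1 ++ s2).
Proof.
move=> u /avoids231P no231; apply/avoids231P => b c a bc ca.
have neq_x d : d \in s1 ++ s2 -> d != x.
  apply: contraTneq => ->; move: u; rewrite cat_uniq /= mem_cat.
  by case/and4P => _ /norP [x1 _] x2 _; rewrite (negbTE x1) (negbTE x2).
case/andP: (before_mem bc) => b_s c_s; case/andP: (before_mem ca) => _ a_s.
by apply: no231; apply: before_insert; rewrite ?neq_x.
Qed.

Lemma avoids231_dec s : sorted gtn s -> avoids231 s.
Proof.
move=> s_dec; apply/avoids231P => b c a bc _; case/andP: (before_mem bc) => b_s c_s.
move: bc; rewrite (before_sorted (rev_trans ltn_trans) ltnn s_dec b_s c_s) /= => cb.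
by apply/negP; lia.
Qed.

Lemma push_pop_sorted y st : sorted ltn st -> y \notin st ->
  push_pop (sorted leq) y st = ([seq a <- st | a < y], y :: [seq a <- st | y < a]).
Proof.
elim: st => [|a st IHst] // st_sorted; rewrite inE negb_or => /andP [ya y_st].
have /andP [a_st st_sorted'] : all (ltn a) st && sorted ltn st.
  by rewrite -(path_sortedE ltn_trans).
rewrite push_pop_cons.
have [lt_ya | lt_ay] : y < a \/ a < y by move: ya; rewrite neq_ltn => /orP.
  have y_st' : all (ltn y) (a :: st).
    by rewrite /= lt_ya; apply: sub_all a_st => b; apply: ltn_trans.
  have -> : sorted leq [:: y, a & st].
    by rewrite /= (ltnW lt_ya) (sub_path (fun _ _ => @ltnW _ _) st_sorted).
  rewrite (all_filterP y_st'); congr (_, _); apply/esym/eqP.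
  by rewrite -[_ == _]negbK -has_filter; apply/hasPn => b /(allP y_st') /ltnW; rewrite /= leqNgt.
have -> : sorted leq [:: y, a & st] = false by rewrite /= leqNgt lt_ay.
by rewrite IHst //= lt_ay ltnNge (ltnW lt_ay).
Qed.

Definition has_larger_after (s : seq nat) a := has (fun c => before s a c && (a < c)) s.

Lemma has_larger_after_rcons s y a : uniq (rcons s y) -> a \in s ->
  has_larger_after (rcons s y) a = has_larger_after s a || (a < y).
Proof.
move=> u a_s; rewrite /has_larger_after has_rcons before_rcons // eqxx a_s orbT /= orbC.
by congr (_ || _); apply: eq_in_has => c c_s; rewrite before_rcons_in.
Qed.

Lemma has_larger_after_last s y : uniq (rcons s y) -> has_larger_after (rcons s y) y = false.
Proof. by move=> u; apply/hasPn => c _; rewrite before_rconsF. Qed.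

Lemma avoids231_rcons s y : uniq (rcons s y) ->
  avoids231 (rcons s y) = avoids231 s && all (fun b => ~~ (has_larger_after s b && (y < b))) s.
Proof.
move=> u; have before_s b c : c \in s -> before (rcons s y) b c = before s b c.
  exact: before_rcons_in.
apply/avoids231P/andP => [no231 | [/avoids231P no231 /allP no_y]].
  split.
    apply/avoids231P => b c a bc ca; apply: no231; rewrite before_s //.
    - by case/andP: (before_mem bc).
    - by case/andP: (before_mem ca).
  apply/allP => b b_s; apply/negP => /andP [/hasP [c c_s /andP [bc lt_bc]] lt_yb].
  have := no231 b c y; rewrite before_s // before_rcons_last // => /(_ bc isT).
  by rewrite lt_yb lt_bc.
move=> b c a bc; rewrite before_rcons // => /orP [ca | /andP [/eqP -> c_s]].
  have c_s : c \in s by case/andP: (before_mem ca).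
  by apply: no231 => //; rewrite -before_s.
have bc' : before s b c by rewrite -before_s.
have b_s : b \in s by case/andP: (before_mem bc').
apply/negP => /andP [lt_yb lt_bc]; move: (no_y b b_s); rewrite lt_yb andbT => /negP; apply.
by apply/hasP; exists c => //; rewrite bc' lt_bc.
Qed.

Lemma sorted_insert_stack out st y : sorted ltn st -> y \notin st ->
  sorted ltn (out ++ [seq a <- st | a < y] ++ y :: [seq a <- st | y < a]) =
  sorted ltn (out ++ st) && all (gtn y) out.
Proof.
move=> st_sorted y_st; set M := _ ++ _ :: _.
have memM : M =i y :: st.
  move=> b; rewrite mem_cat !inE !mem_filter orbCA -andb_orl.
  by case: eqVneq => [// | neq_by] /=; rewrite -neq_ltn neq_by.
have M_sorted : sorted ltn M.
  have filter_sorted p : sorted ltn [seq a <- st | p a].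
    exact: (sorted_filter ltn_trans _ st_sorted).
  rewrite (sorted_catE ltn_trans) /= (path_sortedE ltn_trans) !filter_sorted !andbT.
  apply/andP; split; last by apply/allP => b; rewrite mem_filter => /andP [].
  apply/allrelP => a b; rewrite inE !mem_filter => /andP [lt_ay _].
  by case/predU1P => [-> // | /andP [lt_yb _]]; apply: ltn_trans lt_yb.
rewrite [LHS](sorted_catE ltn_trans) [in RHS](sorted_catE ltn_trans) M_sorted st_sorted.
by rewrite (eq_allrel_memr _ _ memM) allrel_consr !andbT -andbA andbC.
Qed.

Lemma west_run_inv sig : uniq sig ->
  let: (out, st) := run (sorted leq) sig [::] in
  [/\ sorted ltn st, (forall a, (a \in out) = (a \in sig) && has_larger_after sig a)
    & sorted ltn (out ++ st) = avoids231 sig].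
Proof.
elim/last_ind: sig => [|sig y IHsig] u.
  by split => //=; apply/avoids231P => b c a /before_mem.
have [u' y_sig] : uniq sig /\ y \notin sig by move: u; rewrite rcons_uniq => /andP [].
have := run_perm (sorted leq) sig [::]; rewrite cats0.
move: (IHsig u'); rewrite run_rcons.
case: (run (sorted leq) sig [::]) => out st [st_sorted mem_out out_st] /= perm_sig.
have mem_sig a : (a \in sig) = (a \in out) || (a \in st) by rewrite -(perm_mem perm_sig) mem_cat.
have y_st : y \notin st by apply: contra y_sig; rewrite mem_sig => ->; rewrite orbT.
rewrite push_pop_sorted //; split.
- rewrite /= (path_sortedE ltn_trans) (sorted_filter ltn_trans _ st_sorted) andbT.
  by apply/allP => b; rewrite mem_filter => /andP [].
- move=> a; rewrite mem_cat mem_filter mem_rcons inE.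
  have [a_sig | a_sig] := boolP (a \in sig).
    rewrite has_larger_after_rcons // orbT /= mem_out a_sig /=.
    have [// | no_larger] := boolP (has_larger_after sig a).
    have a_st : a \in st by move: (a_sig); rewrite mem_sig mem_out a_sig (negbTE no_larger).
    by rewrite a_st andbT.
  rewrite orbF; have [-> | neq_ay] := eqVneq a y.
    rewrite has_larger_after_last // andbF.
    apply/negP => /orP [y_out | /andP [_ y_st']]; last by rewrite y_st' in y_st.
    by move: y_sig; rewrite mem_sig y_out.
  by apply/negP => /orP [a_out | /andP [_ a_st]]; move: a_sig; rewrite mem_sig ?a_out ?a_st ?orbT.
- rewrite -catA sorted_insert_stack // out_st avoids231_rcons //; congr (_ && _).
  rewrite -[RHS](@eq_in_all _ (fun b => ~~ ((b \in out) && (y < b)))); last first.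
    by move=> b b_sig; rewrite mem_out b_sig.
  rewrite (eq_all_r (s2 := out ++ st)); last by move=> b; rewrite mem_sig mem_cat.
  rewrite all_cat.
  have -> : all (fun b => ~~ ((b \in out) && (y < b))) st.
    apply/allP => b b_st; apply/negP => /andP [b_out _].
    by apply: (uniq_cat_disjoint _ b_out b_st); rewrite (perm_uniq perm_sig).
  rewrite andbT; apply: eq_in_all => b b_out; rewrite b_out /= -leqNgt ltn_neqAle.
  suff -> : b != y by [].
  by apply: contraNneq y_sig => <-; rewrite mem_sig b_out.
Qed.

Lemma west_s_sorted sig : uniq sig -> sorted ltn (west_s sig) = avoids231 sig.
Proof.
move=> u; rewrite west_sE /SC SC_auxE.
by have := west_run_inv u; case: (run (sorted leq) sig [::]) => out st [].
Qed.

(** * The class Av(132, 3214, 4213) *)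

Definition avoids132 (s : seq nat) : bool :=
  all (fun a => all (fun b => all (fun c =>
    ~~ [&& before s a b, before s b c & a < c < b]) s) s) s.

(* Entries c, b, a, d in this order with a < b < c and b < d form a 3214
   (when c < d) or a 4213 (when d < c). *)
Definition avoids3214_4213 (s : seq nat) : bool :=
  all (fun c => all (fun b => all (fun a => all (fun d =>
    ~~ [&& before s c b, before s b a, before s a d, a < b < c & b < d]) s) s) s) s.

Definition av132_3214_4213 s := avoids132 s && avoids3214_4213 s.

Lemma avoids132P s :
  reflect (forall a b c, before s a b -> before s b c -> ~~ (a < c < b)) (avoids132 s).
Proof.
apply: (iffP allP) => [no132 a b c ab bc | no132 a a_s].
  case/andP: (before_mem ab) => a_s b_s; case/andP: (before_mem bc) => _ c_s.
  by move/allP: (no132 a a_s) => /(_ b b_s) /allP /(_ c c_s); rewrite ab bc.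
apply/allP => b b_s; apply/allP => c c_s; apply/negP => /and3P [ab bc acb].
by move: (no132 a b c ab bc); rewrite acb.
Qed.

Lemma avoids3214_4213P s :
  reflect (forall c b a d, before s c b -> before s b a -> before s a d ->
             ~~ ((a < b < c) && (b < d)))
          (avoids3214_4213 s).
Proof.
apply: (iffP allP) => [no4 c b a d cb ba ad | no4 c c_s].
  case/andP: (before_mem cb) => c_s b_s; case/andP: (before_mem ad) => a_s d_s.
  move/allP: (no4 c c_s) => /(_ b b_s) /allP /(_ a a_s) /allP /(_ d d_s).
  by rewrite cb ba ad.
apply/allP => b b_s; apply/allP => a a_s; apply/allP => d d_s.
apply/negP => /and5P [cb ba ad abc bd].
by move: (no4 c b a d cb ba ad); rewrite abc bd.
Qed.

Definition ends132 (s : seq nat) x :=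
  has (fun y => has (fun z => [&& before s y z, y < x & x < z]) s) s.

Definition ends3214_4213 (s : seq nat) x :=
  has (fun c => has (fun b => has (fun a =>
    [&& before s c b, before s b a, a < b, b < c & b < x]) s) s) s.

Lemma avoids132_rcons s x : uniq (rcons s x) ->
  avoids132 (rcons s x) = avoids132 s && ~~ ends132 s x.
Proof.
move=> u; apply/avoids132P/andP => [no132 | [/avoids132P no132 /hasPn no_end]].
  split; first by apply/avoids132P => a b c ab bc; apply: no132; apply: before_rconsl.
  apply/hasPn => y y_s; apply/hasPn => z z_s; apply/negP => /and3P [yz yx xz].
  have := no132 y z x (before_rconsl u yz) (before_rcons_last u z_s).
  by rewrite yx xz.
move=> a b c ab; rewrite before_rcons // => /orP [bc | /andP [/eqP -> b_s]].
  have b_s : b \in s by case/andP: (before_mem bc).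
  by apply: no132 => //; rewrite -(before_rcons_in _ u b_s).
have ab' : before s a b by rewrite -(before_rcons_in _ u b_s).
have a_s : a \in s by case/andP: (before_mem ab').
by move/hasPn: (no_end a a_s) => /(_ b b_s); rewrite ab'.
Qed.

Lemma avoids3214_4213_rcons s x : uniq (rcons s x) ->
  avoids3214_4213 (rcons s x) = avoids3214_4213 s && ~~ ends3214_4213 s x.
Proof.
move=> u; apply/avoids3214_4213P/andP => [no4 | [/avoids3214_4213P no4 /hasPn no_end]].
  split; first by apply/avoids3214_4213P => c b a d cb ba ad; apply: no4; apply: before_rconsl.
  apply/hasPn => c c_s; apply/hasPn => b b_s; apply/hasPn => a a_s.
  apply/negP => /and5P [cb ba ab bc bx].
  have := no4 c b a x (before_rconsl u cb) (before_rconsl u ba) (before_rcons_last u a_s).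
  by rewrite ab bc bx.
move=> c b a d cb ba; rewrite before_rcons // => /orP [ad | /andP [/eqP -> a_s]].
- have a_s : a \in s by case/andP: (before_mem ad).
  have ba' : before s b a by rewrite -(before_rcons_in _ u a_s).
  have b_s : b \in s by case/andP: (before_mem ba').
  by apply: no4 => //; rewrite -(before_rcons_in _ u b_s).
- have ba' : before s b a by rewrite -(before_rcons_in _ u a_s).
  have b_s : b \in s by case/andP: (before_mem ba').
  have cb' : before s c b by rewrite -(before_rcons_in _ u b_s).
  have c_s : c \in s by case/andP: (before_mem cb').
  move/hasPn: (no_end c c_s) => /(_ b b_s) /hasPn /(_ a a_s).
  by rewrite cb' ba' /= -!andbA.
Qed.

Lemma not_av132_3214_4213_rcons s x : uniq (rcons s x) -> av132_3214_4213 s ->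
  ~~ av132_3214_4213 (rcons s x) -> ends132 s x || ends3214_4213 s x.
Proof.
move=> u /andP [no132 no4].
rewrite /av132_3214_4213 avoids132_rcons // avoids3214_4213_rcons // no132 no4 /=.
by rewrite negb_and !negbK.
Qed.

Lemma occ_at_embedding pi tau idx : uniq pi -> uniq tau -> sorted ltn idx ->
  all (gtn (size pi)) idx -> occ_at pi tau [::] idx ->
  exists g : nat -> nat, (forall a b, before tau a b -> before pi (g a) (g b)) /\
    {in tau &, forall a b, (g a < g b) = (a < b)}.
Proof.
move=> u_pi u_tau idx_sorted idx_small /and3P [/eqP size_idx occ _].
exists (fun a => nth 0 pi (nth 0 idx (index a tau))); split.
  move=> a b /and3P [a_tau b_tau ab].
  have idx_at c : c \in tau -> nth 0 idx (index c tau) < size pi.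
    by move=> c_tau; apply: (allP idx_small); rewrite mem_nth // size_idx index_mem.
  rewrite /before !mem_nth ?idx_at //= !index_uniq ?idx_at //.
  by apply: (sorted_ltn_nth ltn_trans 0 idx_sorted); rewrite // inE /= size_idx index_mem.
move=> a b a_tau b_tau.
have index_iota c : c \in tau -> index c tau \in iota 0 (size tau).
  by move=> c_tau; rewrite mem_iota add0n index_mem.
move/allP: occ => /(_ _ (index_iota a a_tau)) /allP /(_ _ (index_iota b b_tau)) /eqP ->.
by rewrite !nth_index.
Qed.

Lemma av132_3214_4213_contains pi tau : uniq pi -> uniq tau ->
  contains pi tau -> av132_3214_4213 pi -> av132_3214_4213 tau.
Proof.
move=> u_pi u_tau /vcontainsP [idx [idx_sorted idx_small occ]].
move=> /andP [/avoids132P no132 /avoids3214_4213P no4].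
have [g [g_before g_lt]] := occ_at_embedding u_pi u_tau idx_sorted idx_small occ.
apply/andP; split.
  apply/avoids132P => a b c ab bc.
  case/andP: (before_mem ab) => a_tau b_tau; case/andP: (before_mem bc) => _ c_tau.
  by have := no132 _ _ _ (g_before _ _ ab) (g_before _ _ bc); rewrite !g_lt.
apply/avoids3214_4213P => c b a d cb ba ad.
case/andP: (before_mem cb) => c_tau b_tau; case/andP: (before_mem ad) => a_tau d_tau.
by have := no4 _ _ _ _ (g_before _ _ cb) (g_before _ _ ba) (g_before _ _ ad); rewrite !g_lt.
Qed.

(** * Pushing onto a 1_23-avoiding stack *)

Lemma has_1_23_cons y s : has_1_23 (y :: s) = ascent_above y s || has_1_23 s.
Proof. by []. Qed.

Lemma ascent_above_dec y s : sorted gtn s -> ascent_above y s = false.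
Proof.
elim: s => [|a s IHs] //= s_dec; rewrite IHs ?(path_sorted s_dec) // orbF.
by case: s s_dec {IHs} => // b s /andP [ba _]; rewrite [a < b]ltnNge (ltnW ba) andbF.
Qed.

Lemma has_1_23_dec s : sorted gtn s -> has_1_23 s = false.
Proof.
by elim: s => [|a s IHs] //= s_dec; rewrite ascent_above_dec ?IHs ?(path_sorted s_dec).
Qed.

Lemma ascent_above_cat y s1 s2 : ascent_above y (s1 ++ s2) =
  [|| ascent_above y s1, [&& s1 != [::], s2 != [::], y < last 0 s1 & last 0 s1 < head 0 s2]
    | ascent_above y s2].
Proof.
elim: s1 => [|a s1 IHs1] //=; rewrite IHs1; case: s1 {IHs1} => [|b s1] /=.
  by case: s2 => [|c s2] //=; rewrite ?orbF.
by rewrite !orbA.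
Qed.

Lemma has_1_23_cat_dec V W : sorted gtn V -> sorted gtn W ->
  (V != [::] -> W != [::] -> last 0 V < head 0 W) -> has_1_23 (V ++ W) = false.
Proof.
elim: V => [|v V IHV] /= V_dec W_dec junction; first exact: has_1_23_dec.
rewrite IHV ?(path_sorted V_dec) //; last first.
  by case: V {IHV V_dec} junction => // a V junction _; apply: junction.
rewrite ascent_above_cat !ascent_above_dec ?(path_sorted V_dec) // orbF /=.
case: V V_dec {IHV junction} => [|a V] // V_dec.
have /allP lt_v := order_path_min (rev_trans ltn_trans) V_dec.
by rewrite /= [v < _]ltnNge (ltnW (lt_v _ (mem_last a V))) /= andbF.
Qed.

Lemma push_pop_1_23_dec x W : sorted gtn W -> push_pop avoid1_23 x W = ([::], x :: W).
Proof.
case: W => [|w W] // W_dec.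
by rewrite push_pop_cons has_1_23_cons ascent_above_dec // (has_1_23_dec W_dec).
Qed.

Lemma push_pop_1_23_pop x V W : V != [::] -> W != [::] -> sorted gtn V -> sorted gtn W ->
  last 0 V < head 0 W -> x < last 0 V -> push_pop avoid1_23 x (V ++ W) = (V, x :: W).
Proof.
move=> + W0 + W_dec; elim: V => [|v V IHV] // _ V_dec junction x_last.
have V_dec' := path_sorted V_dec.
rewrite cat_cons push_pop_cons has_1_23_cons -cat_cons ascent_above_cat W0 x_last junction.
rewrite /= orbT /=.
case: V IHV V_dec V_dec' junction x_last => [|a V] IHV _ V_dec' junction x_last.
  by rewrite /= push_pop_1_23_dec.
by rewrite IHV.
Qed.

Lemma push_pop_1_23_push x V W : V != [::] -> sorted gtn V -> sorted gtn W ->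
  (W != [::] -> last 0 V < head 0 W) -> last 0 V < x ->
  push_pop avoid1_23 x (V ++ W) = ([::], x :: V ++ W).
Proof.
case: V => [|v V] // _ V_dec W_dec junction last_x.
rewrite cat_cons push_pop_cons has_1_23_cons -cat_cons ascent_above_cat.
rewrite !ascent_above_dec // orbF.
rewrite (has_1_23_cat_dec V_dec W_dec (fun _ => junction)).
by rewrite orbF ltnNge (ltnW last_x) /= andbF.
Qed.

(** * The run of SC_1_23 *)

(* While tau = R ++ S stays in the class, with R increasing, the run is in one of
   two configurations: either S is empty, nothing has been output and the stack is
   rev R; or S starts below max R and, writing S = S1 ++ m :: S2 with m = min S,
   the output is S1 in decreasing order and the stack is m :: S2 in decreasing
   order (the run V) on top of rev R. *)
Definition split_state (R S S1 : seq nat) (m : nat) (S2 V out : seq nat) : Prop :=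
  [/\ R != [::], S = S1 ++ m :: S2, head 0 S < last 0 R, all (leq m) S &
   [/\ perm_eq out S1, perm_eq V (m :: S2), sorted gtn out, sorted gtn V & allrel gtn out V]].

Definition SC_1_23_state (tau out st : seq nat) : Prop :=
  exists R S, [/\ tau = R ++ S, sorted ltn R &
    (S = [::] /\ out = [::] /\ st = rev R) \/
    (exists S1 m S2 V, st = V ++ rev R /\ split_state R S S1 m S2 V out)].

Lemma SC_1_23_state_inc R x : x \notin R -> sorted ltn R ->
  SC_1_23_state (rcons R x) [::] (x :: rev R).
Proof.
move=> x_R R_inc; have [x_ext | x_below] := boolP ((R == [::]) || (last 0 R < x)).
  exists (rcons R x), [::]; split; first by rewrite cats0.
    by case: R R_inc x_ext {x_R} => //= r R; rewrite rcons_path => -> /=; apply: id.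
  by left; rewrite rev_rcons.
exists R, [:: x]; split; [by rewrite cats1 | done | right].
move: x_below; rewrite negb_or -leqNgt => /andP [R0 x_last].
exists [::], x, [::], [:: x]; split => //; split => //=; rewrite ?leqnn //.
by rewrite ltn_neqAle x_last andbT; apply: contraNneq x_R => ->; rewrite last_in.
Qed.

Lemma ends3214_4213_inc R x : sorted ltn R -> ends3214_4213 R x = false.
Proof.
move=> R_inc; apply/hasPn => c _; apply/hasPn => b _; apply/hasPn => a _.
apply/negP => /and5P [/(before_sorted_rel ltn_trans ltnn R_inc) cb _ _ bc _].
by move: (ltn_trans cb bc); rewrite ltnn.
Qed.

Lemma ends132_inc_push R x : sorted ltn R -> x \notin R -> ends132 R x ->
  ~~ avoids231 (x :: rev R).
Proof.
move=> R_inc x_R /hasP [y y_R /hasP [z z_R /and3P [_ yx xz]]].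
have xz_before : before (x :: rev R) x z by apply: before_head; rewrite ?mem_rev.
have zy_before : before (x :: rev R) z y.
  apply: (before_catr (s1 := [:: x])).
    by rewrite /= mem_rev x_R rev_uniq (sorted_uniq ltn_trans ltnn).
  by rewrite before_rev_inc // (ltn_trans yx xz).
by apply/negP => /avoids231P /(_ x z y xz_before zy_before); rewrite yx xz.
Qed.

Section SplitState.
Variables (R S S1 S2 V out : seq nat) (m : nat).
Hypotheses (R_inc : sorted ltn R) (uRS : uniq (R ++ S)).
Hypothesis inv : split_state R S S1 m S2 V out.

Lemma split_state_mem z : (z \in S) = (z \in out) || (z \in V).
Proof. by case: inv => _ -> _ _ [/perm_mem-> /perm_mem-> _ _ _]; rewrite mem_cat. Qed.

Lemma split_state_m_in_V : m \in V.
Proof. by case: inv => _ _ _ _ [_ /perm_mem-> _ _ _]; apply: mem_head. Qed.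

Lemma split_state_m_le z : z \in S -> m <= z.
Proof. by case: inv => _ _ _ /allP m_le _; apply: m_le. Qed.

Lemma split_state_last_V : last 0 V = m.
Proof.
case: inv => _ _ _ _ [_ _ _ V_dec _]; apply: sorted_gtn_last_min split_state_m_in_V _ => //.
by move=> v v_V; apply: split_state_m_le; rewrite split_state_mem v_V orbT.
Qed.

Lemma split_state_V_neq0 : V != [::].
Proof. by apply: contraTneq split_state_m_in_V => ->. Qed.

Lemma split_state_m_lt_last : m < last 0 R.
Proof.
case: inv => _ eq_S head_lt _ _; apply: leq_ltn_trans head_lt; apply: split_state_m_le.
by rewrite eq_S; case: (S1) => [|a S1'] /=; rewrite ?mem_head.
Qed.

Lemma split_state_m_lt_out z : z \in out -> m < z.
Proof.
move=> z_out; have z_S : z \in S by rewrite split_state_mem z_out.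
rewrite ltn_neqAle split_state_m_le // andbT; apply: contraTneq z_out => <-.
case: inv => _ eq_S _ _ [/perm_mem-> _ _ _ _]; move: uRS; rewrite cat_uniq eq_S.
by case/and3P => _ _; rewrite cat_uniq => /and3P [_ /hasPn /(_ m (mem_head _ _))].
Qed.

Lemma split_state_dec : sorted gtn (out ++ V).
Proof.
by case: inv => _ _ _ _ [_ _ out_dec V_dec out_V]; rewrite sorted_catE ?out_dec ?V_dec ?out_V //;
   apply: rev_trans ltn_trans.
Qed.

Lemma split_state_perm : perm_eq ((out ++ V) ++ rev R) (R ++ S).
Proof.
case: inv => _ -> _ _ [out_S1 V_S2 _ _ _].
by rewrite perm_catC; apply: perm_cat; rewrite ?perm_rev ?perm_cat.
Qed.

Lemma split_state_uniq : uniq ((out ++ V) ++ rev R).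
Proof. by rewrite (perm_uniq split_state_perm). Qed.

Lemma split_state_before_S1 a b : a \in S1 -> b \in m :: S2 -> before S a b.
Proof.
case: inv uRS => _ eq_S _ _ _; rewrite eq_S cat_uniq => /and3P [_ _ uS].
exact: before_cat.
Qed.

Lemma split_state_before_m b : b \in S2 -> before S m b.
Proof.
case: inv uRS => _ eq_S _ _ _; rewrite eq_S cat_uniq => /and3P [_ _ uS] b_S2.
apply: (before_catr uS); apply: before_head b_S2.
by move: uS; rewrite cat_uniq => /and3P [_ _ /andP []].
Qed.

Section Step.
Variable x : nat.
Hypothesis x_RS : x \notin R ++ S.

Lemma split_state_insert_uniq W1 W2 : W1 ++ W2 = (out ++ V) ++ rev R -> uniq (W1 ++ x :: W2).
Proof.
move=> eq_W; have : perm_eq (W1 ++ x :: W2) (x :: R ++ S).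
  by rewrite -cat1s perm_catCA /= perm_cons eq_W split_state_perm.
by move/perm_uniq ->; rewrite /= x_RS uRS.
Qed.

Lemma split_state_pop : x < m -> SC_1_23_state (rcons (R ++ S) x) (out ++ V) (x :: rev R).
Proof.
move=> x_m; case: (inv) => R0 eq_S head_lt _ [out_S1 V_S2 _ _ _].
exists R, (rcons S x); split; [by rewrite rcons_cat | done | right].
exists S, x, [::], [:: x]; split => //; split => //.
- by rewrite cats1.
- by move: head_lt; rewrite eq_S; case: (S1).
- rewrite all_rcons leqnn; apply/allP => z /split_state_m_le.
  exact: leq_trans (ltnW x_m).
split => //; first by rewrite eq_S perm_cat.
  exact: split_state_dec.
rewrite allrel1r; apply/allP => z; rewrite mem_cat -split_state_mem => /split_state_m_le.
exact: leq_trans.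
Qed.

Lemma split_state_pop231 : x < m -> ends132 (R ++ S) x || ends3214_4213 (R ++ S) x ->
  ~~ avoids231 ((out ++ V) ++ x :: rev R).
Proof.
move=> x_m; have below_R z : z \in R ++ S -> z < x -> z \in R.
  rewrite mem_cat => /orP [// | /split_state_m_le m_z z_x].
  by move: (leq_ltn_trans m_z (ltn_trans z_x x_m)); rewrite ltnn.
case/orP => [/hasP [y y_RS /hasP [z _ /and3P [_ y_x _]]] |].
  have y_R := below_R y y_RS y_x.
  have [R0 u_R] : R != [::] /\ last 0 R \in R by case: inv => R0 *; rewrite last_in.
  have x_u : x < last 0 R := ltn_trans x_m split_state_m_lt_last.
  have u : uniq ((out ++ V) ++ x :: rev R) by apply: split_state_insert_uniq.
  have x_R : x \notin R by apply: contra x_RS; rewrite mem_cat => ->.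
  have xu : before ((out ++ V) ++ x :: rev R) x (last 0 R).
    by apply: (before_catr u); apply: before_head; rewrite mem_rev.
  have uy : before ((out ++ V) ++ x :: rev R) (last 0 R) y.
    apply: (before_catr u); apply: (before_catr (s1 := [:: x])).
      by rewrite /= mem_rev x_R rev_uniq (sorted_uniq ltn_trans ltnn).
    by rewrite before_rev_inc // (ltn_trans y_x x_u).
  by apply/negP => /avoids231P /(_ x (last 0 R) y xu uy); rewrite y_x x_u.
case/hasP => c _ /hasP [b b_RS /hasP [a _ /and5P [cb _ _ bc b_x]]].
have cb_R := before_cat_inl uRS cb (below_R b b_RS b_x).
by move: (ltn_trans (before_sorted_rel ltn_trans ltnn R_inc cb_R) bc); rewrite ltnn.
Qed.

Lemma split_state_push_V : m < x -> avoids132 (rcons (R ++ S) x) -> {in V, forall v, v < x}.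
Proof.
move=> m_x /avoids132P no132 v v_V.
have u : uniq (rcons (R ++ S) x) by rewrite rcons_uniq x_RS uRS.
have v_S : v \in S by rewrite split_state_mem v_V orbT.
have [// | x_v | eq_vx] := ltngtP v x; last by move: x_RS; rewrite mem_cat -eq_vx v_S orbT.
move: v_V; case: inv => _ _ _ _ [_ /perm_mem-> _ _ _]; rewrite inE => /predU1P [eq_vm | v_S2].
  by move: (ltn_trans m_x x_v); rewrite eq_vm ltnn.
have mv : before (rcons (R ++ S) x) m v.
  by apply: (before_rconsl u); apply: (before_catr uRS); apply: split_state_before_m.
have vx : before (rcons (R ++ S) x) v x by apply: (before_rcons_last u); rewrite mem_cat v_S orbT.
by move: (no132 m v x mv vx); rewrite m_x x_v.
Qed.

Lemma split_state_push_out : m < x -> avoids3214_4213 (rcons (R ++ S) x) ->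
  {in out, forall o, x < o}.
Proof.
move=> m_x /avoids3214_4213P no4 o o_out.
have u : uniq (rcons (R ++ S) x) by rewrite rcons_uniq x_RS uRS.
have lift a b : before S a b -> before (rcons (R ++ S) x) a b.
  by move=> ab; apply: (before_rconsl u); apply: (before_catr uRS).
have m_S : m \in S by rewrite split_state_mem split_state_m_in_V orbT.
have mx : before (rcons (R ++ S) x) m x.
  by apply: (before_rcons_last u); rewrite mem_cat m_S orbT.
have o_S : o \in S by rewrite split_state_mem o_out.
have [o_x | // | eq_ox] := ltngtP o x; last by move: x_RS; rewrite mem_cat -eq_ox o_S orbT.
have m_o := split_state_m_lt_out o_out.
case: (inv) => R0 eq_S head_lt _ [out_S1 _ _ _ _].
have o_S1 : o \in S1 by rewrite -(perm_mem out_S1).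
case E: S1 o_S1 out_S1 eq_S => [// | f S1'] o_S1 out_S1 eq_S.
have f_out : f \in out by rewrite (perm_mem out_S1) mem_head.
have fm : before S f m by apply: split_state_before_S1; rewrite ?E ?mem_head.
have [f_x | x_f] := ltnP f x.
  have uf : before (rcons (R ++ S) x) (last 0 R) f.
    by apply: (before_rconsl u); apply: before_cat; rewrite ?last_in // eq_S mem_head.
  have := no4 _ _ _ _ uf (lift _ _ fm) mx.
  by rewrite split_state_m_lt_out //= f_x andbT; move: head_lt; rewrite eq_S => ->.
have o_f : o < f := leq_trans o_x x_f.
have fo : before S f o.
  have uS : uniq S by move: uRS; rewrite cat_uniq => /and3P [].
  rewrite eq_S; apply: before_catl; apply: before_head.
    by move: uS; rewrite eq_S /= mem_cat negb_or => /andP [/andP []].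
  by move: o_S1; rewrite inE (ltn_eqF o_f).
have om : before S o m by apply: split_state_before_S1; rewrite ?E ?mem_head.
by have := no4 _ _ _ _ (lift _ _ fo) (lift _ _ om) mx; rewrite m_o o_f o_x.
Qed.

Lemma split_state_push : m < x -> av132_3214_4213 (rcons (R ++ S) x) ->
  SC_1_23_state (rcons (R ++ S) x) out (x :: V ++ rev R).
Proof.
move=> m_x /andP [no132 no4].
have /allP V_x := split_state_push_V m_x no132; have /allP x_out := split_state_push_out m_x no4.
case: (inv) => R0 eq_S head_lt m_le [out_S1 V_S2 out_dec V_dec out_V].
exists R, (rcons S x); split; [by rewrite rcons_cat | done | right].
exists S1, m, (rcons S2 x), (x :: V); split => //; split => //.
- by rewrite eq_S rcons_cat rcons_cons.
- by move: head_lt; rewrite eq_S; case: (S1).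
- by rewrite all_rcons (ltnW m_x).
split => //.
- by rewrite -rcons_cons perm_sym perm_rcons perm_cons perm_sym.
- by rewrite /= (path_sortedE (rev_trans ltn_trans)) V_dec andbT.
- by rewrite allrel_consr out_V andbT.
Qed.

Lemma split_state_push_avoids231 : m < x -> avoids231 (out ++ x :: V ++ rev R) ->
  [/\ {in V, forall v, v < x}, {in out, forall o, x < o}
    & {in R &, forall r r', r < x -> x < r' -> False}].
Proof.
move=> m_x /avoids231P no231; set C := out ++ x :: V ++ rev R.
have uC : uniq C by apply: split_state_insert_uniq; rewrite catA.
have ux : uniq (x :: V ++ rev R) by move: uC; rewrite cat_uniq => /and3P [].
have x_before r : r \in V ++ rev R -> before C x r.
  by move=> r_in; apply: (before_catr uC); apply: before_head r_in; case/andP: ux.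
have tail_before a b : before (V ++ rev R) a b -> before C a b.
  by move=> ab; apply: (before_catr uC); apply: (before_catr (s1 := [:: x])).
have m_V := split_state_m_in_V.
have x_S : x \notin S by apply: contra x_RS; rewrite mem_cat => ->; rewrite orbT.
split.
- move=> v v_V; have [// | x_v | eq_vx] := ltngtP v x.
    have vm : before V v m.
      case: inv => _ _ _ _ [_ _ _ V_dec _].
      by rewrite (before_sorted (rev_trans ltn_trans) ltnn V_dec) //= (ltn_trans m_x x_v).
    have xv : before C x v by apply: x_before; rewrite mem_cat v_V.
    by move: (no231 x v m xv (tail_before _ _ (before_catl _ vm))); rewrite m_x x_v.
  by move: x_S; rewrite -eq_vx split_state_mem v_V orbT.
- move=> o o_out; have [o_x | // | eq_ox] := ltngtP o x.
    have ox : before C o x by apply: before_cat; rewrite ?mem_head.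
    have xm : before C x m by apply: x_before; rewrite mem_cat m_V.
    by move: (no231 o x m ox xm); rewrite split_state_m_lt_out // o_x.
  by move: x_S; rewrite -eq_ox split_state_mem o_out.
- move=> r r' r_R r'_R r_x x_r'.
  have r'r : before (V ++ rev R) r' r.
    apply: before_catr; first by case/andP: ux.
    by rewrite before_rev_inc // (ltn_trans r_x x_r').
  have xr' : before C x r' by apply: x_before; rewrite mem_cat mem_rev r'_R orbT.
  by move: (no231 x r' r xr' (tail_before _ _ r'r)); rewrite r_x x_r'.
Qed.

Lemma split_state_ends132 :
  {in V, forall v, v < x} -> {in out, forall o, x < o} ->
  {in R &, forall r r', r < x -> x < r' -> False} -> ends132 (R ++ S) x = false.
Proof.
move=> V_x x_out no_straddle; apply/hasPn => y y_RS; apply/hasPn => z z_RS.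
apply/negP => /and3P [yz y_x x_z].
have [z_R | z_S] : z \in R \/ z \in S by apply/orP; rewrite -mem_cat.
  have yz_R := before_cat_inl uRS yz z_R.
  by case/andP: (before_mem yz_R) => y_R _; apply: (no_straddle y z).
have z_out : z \in out.
  by move: z_S; rewrite split_state_mem => /orP [// | /V_x]; rewrite ltnNge (ltnW x_z).
have [y_R | y_S] : y \in R \/ y \in S by apply/orP; rewrite -mem_cat.
  case: (inv) => R0 eq_S head_lt _ [out_S1 _ _ _ _].
  have [x_u | u_x | eq_xu] := ltngtP x (last 0 R).
  - by apply: (no_straddle y (last 0 R)); rewrite ?last_in.
  - have : head 0 S \in out.
      have z_S1 : z \in S1 by rewrite -(perm_mem out_S1).
      by rewrite (perm_mem out_S1) eq_S; case: (S1) z_S1 => //= f S1' _; rewrite mem_head.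
    by move/x_out => x_h; move: (ltn_trans x_h (ltn_trans head_lt u_x)); rewrite ltnn.
  - by move: x_RS; rewrite mem_cat eq_xu last_in.
move: (y_S); rewrite split_state_mem => /orP [/x_out | y_V].
  by rewrite ltnNge (ltnW y_x).
have zy : before S z y.
  apply: split_state_before_S1; last by case: inv y_V => _ _ _ _ [_ /perm_mem-> _ _ _].
  by case: inv z_out => _ _ _ _ [/perm_mem-> _ _ _ _].
exact: before_asym (before_cat_inr uRS yz y_S) zy.
Qed.

Lemma split_state_ends3214_4213 : avoids132 (R ++ S) -> {in out, forall o, x < o} ->
  ends3214_4213 (R ++ S) x = false.
Proof.
move=> /avoids132P no132 x_out; apply/hasPn => c _; apply/hasPn => b b_RS; apply/hasPn => a _.
apply/negP => /and5P [cb ba a_b b_c b_x].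
have b_S : b \in S.
  move: b_RS; rewrite mem_cat => /orP [b_R | //].
  have cb_R := before_cat_inl uRS cb b_R.
  by move: (ltn_trans (before_sorted_rel ltn_trans ltnn R_inc cb_R) b_c); rewrite ltnn.
have ba_S := before_cat_inr uRS ba b_S.
have a_S : a \in S by case/andP: (before_mem ba_S).
have m_b : m < b := leq_ltn_trans (split_state_m_le a_S) a_b.
move: b_S; rewrite split_state_mem => /orP [/x_out | b_V]; first by rewrite ltnNge (ltnW b_x).
have b_S2 : b \in S2.
  move: b_V; case: inv => _ _ _ _ [_ /perm_mem-> _ _ _]; rewrite inE => /predU1P [eq_bm | //].
  by rewrite eq_bm ltnn in m_b.
have mb := split_state_before_m b_S2.
have [eq_am | neq_am] := eqVneq a m.
  by rewrite eq_am in ba_S; case: (before_asym ba_S mb).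
have m_a : m < a by rewrite ltn_neqAle eq_sym neq_am split_state_m_le.
by move: (no132 m b a (before_catr uRS mb) ba); rewrite m_a a_b.
Qed.

Lemma split_state_push231 : m < x -> avoids132 (R ++ S) ->
  ends132 (R ++ S) x || ends3214_4213 (R ++ S) x -> ~~ avoids231 (out ++ x :: V ++ rev R).
Proof.
move=> m_x no132 ends; apply/negP => /(split_state_push_avoids231 m_x) [V_x x_out no_straddle].
by move: ends; rewrite split_state_ends132 // split_state_ends3214_4213.
Qed.

End Step.
End SplitState.

Lemma SC_1_23_state_avoids231 tau out st : uniq tau -> avoids132 tau ->
  SC_1_23_state tau out st -> avoids231 (out ++ st).
Proof.
move=> u /avoids132P no132 [R [S [eq_tau R_inc [[_ [-> ->]] | [S1 [m [S2 [V [-> inv]]]]]]]]].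
  by apply: avoids231_dec; rewrite rev_sorted.
rewrite eq_tau in u no132.
have uC := split_state_uniq u inv; rewrite catA.
have dec_before D d e : sorted gtn D -> before D d e -> e < d.
  exact: before_sorted_rel (rev_trans ltn_trans) ltnn.
have R_dec : sorted gtn (rev R) by rewrite rev_sorted.
have out_V_dec := split_state_dec inv.
apply/avoids231P => b c a bc ca; apply/negP => /andP [a_b b_c].
have not_dec D : sorted gtn D -> before D b c = false.
  by move=> D_dec; apply/negP => /(dec_before _ _ _ D_dec); rewrite ltnNge (ltnW b_c).
case/(before_catE uC): bc; rewrite ?not_dec // => /andP [b_D c_W].
case/(before_catE uC): ca => [/before_mem /andP [c_D _] | /andP [c_D _] | ca];
  try by case: (uniq_cat_disjoint uC c_D c_W).
have [c_R a_R] : c \in R /\ a \in R by case/andP: (before_mem ca); rewrite !mem_rev.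
have b_S : b \in S by rewrite (split_state_mem inv) -mem_cat.
have ac : before R a c by rewrite (before_sorted ltn_trans ltnn R_inc) // (ltn_trans a_b b_c).
by have := no132 a c b (before_catl _ ac) (before_cat u c_R b_S); rewrite a_b b_c.
Qed.

Lemma SC_1_23_state_step tau out st x : uniq (rcons tau x) -> av132_3214_4213 tau ->
  SC_1_23_state tau out st ->
  let: (p, st') := push_pop avoid1_23 x st in
  (av132_3214_4213 (rcons tau x) -> SC_1_23_state (rcons tau x) (out ++ p) st') /\
  (~~ av132_3214_4213 (rcons tau x) -> ~~ avoids231 ((out ++ p) ++ st')).
Proof.
move=> u tau_av [R [S [eq_tau R_inc phase]]]; subst tau.
have ends := not_av132_3214_4213_rcons u tau_av.
case: phase => [[eq_S [-> ->]] | [S1 [m [S2 [V [-> inv]]]]]].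
  subst S; rewrite cats0 in u tau_av ends *.
  have x_R : x \notin R by move: u; rewrite rcons_uniq => /andP [].
  rewrite push_pop_1_23_dec ?rev_sorted //; split => [_ | leave].
    exact: SC_1_23_state_inc.
  by apply: ends132_inc_push => //; move: (ends leave); rewrite ends3214_4213_inc ?orbF.
have [uRS x_RS] : uniq (R ++ S) /\ x \notin R ++ S by move: u; rewrite rcons_uniq => /andP [].
have [R0 V_dec] : R != [::] /\ sorted gtn V by case: inv => ? _ _ _ [].
have R_dec : sorted gtn (rev R) by rewrite rev_sorted.
have rev_R0 : rev R != [::] by rewrite -size_eq0 size_rev size_eq0.
have last_V := split_state_last_V inv.
have junction : last 0 V < head 0 (rev R).
  by rewrite last_V head_rev (split_state_m_lt_last inv).
have [x_m | m_x | eq_xm] := ltngtP x m.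
- rewrite (push_pop_1_23_pop (split_state_V_neq0 inv) rev_R0 V_dec R_dec junction); last first.
    by rewrite last_V.
  split => /= [_ | leave]; first exact: (split_state_pop R_inc inv x_m).
  exact: (split_state_pop231 R_inc uRS inv x_RS x_m (ends leave)).
- rewrite (push_pop_1_23_push (split_state_V_neq0 inv) V_dec R_dec (fun=> junction)) ?last_V //.
  rewrite cats0; split => /= [x_av | leave].
    exact: (split_state_push R_inc uRS inv x_RS m_x x_av).
  apply: (split_state_push231 R_inc uRS inv x_RS m_x _ (ends leave)).
  by case/andP: tau_av.
- move: x_RS; rewrite mem_cat eq_xm (split_state_mem inv) (split_state_m_in_V inv).
  by rewrite !orbT.
Qed.

Lemma SC_1_23_run_inv tau : uniq tau ->
  let: (out, st) := run avoid1_23 tau [::] in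
  (av132_3214_4213 tau -> SC_1_23_state tau out st) /\
  (~~ av132_3214_4213 tau -> ~~ avoids231 (out ++ st)).
Proof.
elim/last_ind: tau => [|tau x IHtau] u.
  by split => // _; exists [::], [::]; split => //; left.
have u' : uniq tau by move: u; rewrite rcons_uniq => /andP [].
have := run_perm avoid1_23 tau [::]; rewrite cats0 run_rcons.
case: (run avoid1_23 tau [::]) (IHtau u') => out st [state_tau leave_tau] /= perm_tau.
have [tau_av | tau_leave] := boolP (av132_3214_4213 tau).
  by have := SC_1_23_state_step u tau_av (state_tau tau_av); case: (push_pop _ x st).
have -> : av132_3214_4213 (rcons tau x) = false.
  apply: contraNF tau_leave; rewrite /av132_3214_4213 avoids132_rcons //.
  by rewrite avoids3214_4213_rcons // => /andP [/andP [-> _] /andP [-> _]].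
case: (push_pop_split avoid1_23 x st) => p [s [-> eq_st]]; split => // _.
apply: contra (leave_tau tau_leave) => /avoids231_delete; rewrite eq_st catA; apply.
rewrite (perm_uniq (_ : perm_eq _ (x :: tau))) /= -?rcons_uniq //.
apply/permP => q; move/permP: perm_tau => /(_ q).
by rewrite eq_st !count_cat /=; lia.
Qed.

Lemma SC_1_23_avoids231 tau : uniq tau -> avoids231 (SC_1_23 tau) = av132_3214_4213 tau.
Proof.
move=> u; rewrite SC_1_23E /SC SC_auxE.
have := SC_1_23_run_inv u; case: run => out st [state_tau leave_tau].
have [tau_av | tau_leave] := boolP (av132_3214_4213 tau); last exact/negbTE/leave_tau.
by apply: SC_1_23_state_avoids231 u _ (state_tau tau_av); case/andP: tau_av.
Qed.

Lemma Sort_n_SC_1_23 n tau : Sort_n SC_1_23 n tau = is_perm n tau && av132_3214_4213 tau.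
Proof.
rewrite /Sort_n; have [tau_perm /= | //] := boolP (is_perm n tau).
have u : uniq tau by rewrite (perm_uniq tau_perm) iota_uniq.
have perm_sc : perm_eq (west_s (SC_1_23 tau)) (iota 1 n).
  by rewrite west_sE (perm_trans (SC_perm _ _)) // SC_1_23E (perm_trans (SC_perm _ _)).
rewrite -SC_1_23_avoids231 // -west_s_sorted; last by rewrite SC_1_23E (perm_uniq (SC_perm _ _)).
apply/eqP/idP => [-> | sorted_sc]; first exact: iota_ltn_sorted.
apply: (irr_sorted_eq ltn_trans ltnn) => //; first exact: iota_ltn_sorted.
exact: perm_mem.
Qed.

Theorem mainTheorem14 : perm_class (SortSet SC_1_23).
Proof.
split => [pi [n n_pos /andP [pi_perm _]] | pi tau [n _ pi_sort] [m m_pos tau_perm] pi_tau].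
  by exists n.
exists m => //; rewrite Sort_n_SC_1_23 tau_perm.
move: pi_sort; rewrite Sort_n_SC_1_23 => /andP [pi_perm pi_av].
apply: av132_3214_4213_contains pi_tau pi_av.
- by rewrite (perm_uniq pi_perm) iota_uniq.
- by rewrite (perm_uniq tau_perm) iota_uniq.
Qed.
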